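(* In the setting of the context, the four functions $u=H_{2n}$, $v=H_{2n+1}$, $f=S^{[1]}_{2n}$, $g=S^{[1]}_{2n+1}$ satisfy the following three systems of nonlinear difference equations. (1) For the shifts $\hat{}\,$, $\tilde{}\,$, $\bar{}\,$: \begin{align*} g(\tilde{f}-\hat{f})+\tilde{g}(\tilde{\hat{f}}-\tilde{f})+\hat{g}(\hat{f}-\hat{\tilde{f}})&=\frac{1}{\tilde{d}}\left(\frac{\hat{\bar {u}}}{\hat{\tilde{u}}}-\frac{\bar {u}}{\tilde{u}}\right)+\frac{1}{\hat{d}}\left(\frac{\bar {u}}{\hat{u}}-\frac{\tilde{\bar {u}}}{\tilde{\hat{u}}}\right),\\ \bar {f}(\hat{g}-\tilde{g})+\tilde{\bar{f}}(\tilde{g}-\tilde{\hat{g}})+\hat{\bar {f}}(\hat{\tilde{g}}-\hat{g})&= \frac{1}{\tilde{d}}\left(\frac{\bar {v}}{\tilde{v}}-\frac{\hat{\bar {v}}}{\hat{\tilde{v}}}\right),\\ \frac{1}{\tilde{d}}\frac{\hat{\bar {u}}}{\hat{\tilde{u}}}(\hat{\bar {f}}-\bar {f})+\frac{1}{\hat{d}}\frac{\tilde{\bar {u}}}{\tilde{\hat{u}}}(\bar {f}-\tilde{\bar {f}})+\frac{1}{\tilde{d}}\frac{\bar {v}}{\tilde{v}}(\tilde{f}-\tilde{\hat{f}})&=0,\\ \frac{1}{\hat{d}}\frac{\bar {\bar {u}}}{\hat{\bar {u}}}(\hat{g}-\hat{\tilde{g}})+\frac{1}{\tilde{d}}\frac{\bar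 {\bar {u}}}{\tilde{\bar {u}}}(\tilde{\hat{g}}-\tilde{g})+\frac{1}{\tilde{d}}\frac{\hat{\bar {v}}}{\hat{\tilde{v}}}(\bar {g}-\hat{\bar {g}})&=0. \end{align*} (2) For the shifts $\check{}\,$, $\tilde{}\,$, $\bar{}\,$: \begin{align*} g(\tilde{f}-\check{f})+\tilde{g}(\check{\tilde{f}}-\tilde{f})+\check{g}(\check{f}-\check{\tilde{f}})&=\frac{1}{\tilde{d}}\left(\frac{\check{\bar {u}}}{\check{\tilde{u}}}-\frac{\bar {u}}{\tilde{u}}\right),\\ \bar {f}(\tilde{g}-\check{g})+\tilde{\bar {f}}(\tilde{\check{g}}-\tilde{g})+\check{\bar {f}}(\check{g}-\check{\tilde{g}})&= \frac{1}{\tilde{d}}\left(\frac{\check{\bar {v}}}{\check{\tilde{v}}}-\frac{\bar {v}}{\tilde{v}}\right)+\frac{1}{\check{d}}\left(\frac{\bar {v}}{\check{v}}-\frac{\tilde{\bar {v}}}{\check{\tilde{v}}}\right),\\ \frac{1}{\tilde{d}}\frac{\check{\bar {u}}}{\check{\tilde{u}}}(\bar {f}-\check{\bar {f}})+\frac{1}{\check{d}}\frac{\bar {v}}{\check{v}}(\check{f}-\check{\tilde{f}})+\frac{1}{\tilde{d}}\frac{\bar {v}}{\tilde{v}}(\tilde{\check{f}}-\tilde{f})&=0,\\ \frac{1}{\tilde{d}}\frac{\bar {\bar {u}}}{\tilde{\bar {u}}}(\tilde{g}-\tilde{\check{g}}) +\frac{1}{\check{d}}\frac{\tilde{\bar {v}}}{\tilde{\check{v}}}(\bar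 {g}-\tilde{\bar {g}})+\frac{1}{\tilde{d}}\frac{\check{\bar {v}}}{\check{\tilde{v}}}(\check{\bar {g}}-\bar {g})&=0. \end{align*} (3) For the shifts $\hat{}\,$, $\check{}\,$, $\bar{}\,$: \begin{align*} \frac{1}{\hat d}\frac{\check{\bar {u}}}{\check{\hat{u}}}(\bar {f}-\check{\bar {f}})+\frac{1}{\check d}\frac{\bar {v}}{\check{v}}(\check{f}-\check{\hat{f}})&=0,\\ \frac{1}{\hat d}\frac{\bar {\bar {u}}}{\hat{\bar {u}}}(\hat{\check{g}}-\hat{g})+\frac{1}{\check d}\frac{\hat{\bar {v}}}{\check{\hat{v}}}(\hat{\bar {g}}-\bar {g})&= 0,\\ g(\check{f}-\hat{f})+\check{g}(\check{\hat{f}}-\check{f})+\hat{g}(\hat{f}-\check{\hat{f}})&=\frac{1}{\hat{d}}\left(\frac{\bar {u}}{\hat{u}}-\frac{\check{\bar {u}}}{\hat{\check{u}}}\right),\\ \bar {f}(\check{g}-\hat{g})+\check{\bar {f}}(\check{\hat{g}}-{\check{g}})+\hat{\bar {f}}(\hat{g}-\check{\hat{g}})&=\frac{1}{\check{d}}\left(\frac{\hat{\bar {v}}}{\check{\hat{v}}}-\frac{\bar {v}}{\check{v}}\right). \end{align*}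
   Context: Fix $N,M^{(1)},M^{(2)}\in\mathbb N_0$, parameters $b^{(a)}_i$ ($a\in\{1,2\}$, $1\le i\le M^{(a)}$), $c_j$ ($1\le j\le N$), $\eta^{(1)},\eta^{(2)}$, and hypergeometric weights on $\mathbb N_0$: $w^{(a)}(k)=\frac{(b^{(a)}_1)_k\cdots(b^{(a)}_{M^{(a)}})_k}{(c_1)_k\cdots(c_N)_k}\frac{(\eta^{(a)})^k}{k!}$, with $(b)_k$ the Pochhammer symbol. The moment matrix $\mathscr M$ (indices from $0$) has entries $\mathscr M_{n,2m}=\sum_{k\ge0}k^{n+m}w^{(1)}(k)$, $\mathscr M_{n,2m+1}=\sum_{k\ge0}k^{n+m}w^{(2)}(k)$. It is assumed that for all parameter values considered (including the shifted ones below) the series converge and all leading principal minors $\tau_n$ of $\mathscr M$ are nonzero, so that $\mathscr M=S^{-1}H\tilde S^{-\top}$ with $S,\tilde S$ lower unitriangular semi-infinite matrices and $H=\operatorname{diag}(H_0,H_1,\dots)$. Write $S=I+\Lambda^\top S^{[1]}+(\Lambda^\top)^2S^{[2]}+\cdots$ with $\Lambda$ the shift matrix (ones on the first superdiagonal) and $S^{[k]}=\operatorname{diag}(S^{[k]}_0,S^{[k]}_1,\dots)$; thus $S^{[1]}_n$ is the coefficient of $x^{n}$ in the monic type II multiple orthogonal polynomial $B_{n+1}$ given by the entries of $SX(x)$, $X(x)=(1,x,x^2,\dots)^\top$. Shift notation for a function $u$ of $n$ and the parameters: $\hat u$ is $u$ with one fixed parameter $b^{(1)}_r$ replaced by $b^{(1)}_r+1$,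 and $\hat d:=b^{(1)}_r$; $\check u$ is $u$ with one fixed parameter $b^{(2)}_q$ replaced by $b^{(2)}_q+1$, and $\check d:=b^{(2)}_q$; $\tilde u$ is $u$ with one fixed parameter $c_s$ replaced by $c_s-1$, and $\tilde d:=c_s-1$; $\bar u$ is $u$ with $n$ replaced by $n+2$. Combined symbols denote the composition of the corresponding shifts. *)

From HB Require Import structures.
From mathcomp Require Import all_boot all_order all_algebra.
From mathcomp Require Import all_classical all_reals.
From mathcomp Require Import topology normedtype sequences.
Set Implicit Arguments. Unset Strict Implicit. Unset Printing Implicit Defensive.
Import Order.TTheory GRing.Theory Num.Theory.
Import numFieldNormedType.Exports.
Local Open Scope ring_scope.

Section Defs.
Variable K : numFieldType.

Definition poch (b : K) (k : nat) : K := \prod_(i < k) (b + i%:R).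

Definition hweight (Mb N : nat) (b : 'I_Mb -> K) (c : 'I_N -> K) (eta : K)
  (k : nat) : K :=
  (\prod_(i < Mb) poch (b i) k) / (\prod_(j < N) poch (c j) k)
  * eta ^+ k / (k`!)%:R.

Definition msummand (w : nat -> K) (p : nat) : nat -> K :=
  fun k => (k%:R) ^+ p * w k.
Definition moment (w : nat -> K) (p : nat) : K := limn (series (msummand w p)).

Definition momMat (w1 w2 : nat -> K) (n j : nat) : K :=
  if odd j then moment w2 (n + j./2) else moment w1 (n + j./2).

Definition tau (Mm : nat -> nat -> K) (n : nat) : K :=
  \det (\matrix_(i < n, j < n) Mm i j).

(* Gauss-Borel factorization  M = S^{-1} H St^{-T}  with S, St lower
   unitriangular semi-infinite and H = diag(H_0, H_1, ...), written in the
   equivalent form  S M St^T = H  (all products are finite sums since S, St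
   are lower triangular). *)
Definition lower_unitri (A : nat -> nat -> K) : Prop :=
  (forall i, A i i = 1) /\ (forall i j, (i < j)%N -> A i j = 0).

Definition GaussBorel (Mm : nat -> nat -> K) (S : nat -> nat -> K)
  (H : nat -> K) (St : nat -> nat -> K) : Prop :=
  [/\ lower_unitri S, lower_unitri St &
   forall i j, \sum_(l < j.+1) (\sum_(k < i.+1) S i k * Mm k l) * St j l
               = if i == j then H i else 0].

Definition shift_up (m : nat) (b : 'I_m -> K) (r : 'I_m) : 'I_m -> K :=
  fun i => if i == r then b i + 1 else b i.
Definition shift_down (m : nat) (c : 'I_m -> K) (s : 'I_m) : 'I_m -> K :=
  fun j => if j == s then c j - 1 else c j.

Definition admissible (N M1 M2 : nat) (b1 : 'I_M1 -> K) (b2 : 'I_M2 -> K)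
  (c : 'I_N -> K) (eta1 eta2 : K) : Prop :=
  [/\ forall j k, poch (c j) k != 0,
      forall p, cvgn (series (msummand (hweight b1 c eta1) p)),
      forall p, cvgn (series (msummand (hweight b2 c eta2) p)) &
      forall n, tau (momMat (hweight b1 c eta1) (hweight b2 c eta2)) n != 0].

End Defs.

(* Each of the three shifts multiplies one or both weights by a linear
   polynomial in k (a Christoffel transformation): (b+1)_k / (b)_k = 1 + k/b
   and (c)_k / (c-1)_k = 1 + k/(c-1).  On the moment matrix this adds e times
   the column two places to the right, so by orthogonality and the invertibility
   of the leading blocks the row m+2 of S is a combination of the rows m+2, m+1
   and m of the shifted S', the last coefficient being e H_{m+2} / H'_m.  For two
   commuting shifts, both ways around the square express S in terms of the doubly
   shifted factor S'', and in both the second and third subdiagonals of the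
   connection matrix are those of S S''^-1.  Comparing them for even and odd m
   gives the four equations of each system. *)

From HB Require Import structures.
From mathcomp Require Import all_boot all_order all_algebra.
From mathcomp Require Import all_classical all_reals.
From mathcomp Require Import topology normedtype sequences.
From mathcomp Require Import ring zify.
Set Implicit Arguments. Unset Strict Implicit. Unset Printing Implicit Defensive.
Import Order.TTheory GRing.Theory Num.Theory.
Import numFieldNormedType.Exports.
Local Open Scope ring_scope.

Section TypeIIOrthogonality.
Variable K : numFieldType.
Implicit Types (M S : nat -> nat -> K) (H : nat -> K).

Definition typeII_orth M S H : Prop :=
  lower_unitri S /\
  forall i j, (j <= i)%N -> \sum_(k < i.+1) S i k * M k j = if i == j then H i else 0.

Lemma GaussBorel_typeII_orth M S H St : GaussBorel M S H St -> typeII_orth M S H.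
Proof.
case=> LS [St1 _] GB; split=> // i j.
pose a l := \sum_(k < i.+1) S i k * M k l; rewrite -/(a j).
elim/ltn_ind: j => j IH le_ji.
have := GB i j; rewrite big_ord_recr /= St1 mulr1 -/(a j) => <-.
rewrite big1 ?add0r // => l _; have lt_li := leq_trans (ltn_ord l) le_ji.
by rewrite -/(a l) IH ?(ltnW lt_li) // gtn_eqF ?mul0r.
Qed.

Lemma tau_row_eq0 M p (c : nat -> K) : tau M p != 0 ->
  (forall l, (l < p)%N -> \sum_(k < p) c k * M k l = 0) ->
  forall k, (k < p)%N -> c k = 0.
Proof.
move=> tau_p c_orth k lt_kp.
pose A := \matrix_(i < p, j < p) M i j.
pose x := \row_(j < p) c j.
have A_unit : A \in unitmx by rewrite unitmxE unitfE.
have xA : x *m A = 0.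
  apply/matrixP=> i j; rewrite !mxE -[RHS](c_orth j (ltn_ord j)).
  by apply: eq_bigr => l _; rewrite !mxE.
have /matrixP/(_ 0 (Ordinal lt_kp)) : x = 0 by rewrite -(mulmxK A_unit x) xA mul0mx.
by rewrite !mxE.
Qed.

Lemma typeII_orth_H_neq0 M S H :
  typeII_orth M S H -> (forall p, tau M p != 0) -> forall i, H i != 0.
Proof.
move=> [[S1 _] orth] tau_M i; apply/eqP => Hi0.
suff : S i i = 0 by rewrite S1 => /eqP; rewrite oner_eq0.
apply: (tau_row_eq0 (tau_M i.+1)) => // l le_li.
by rewrite orth //; case: eqP => // ->.
Qed.

Lemma typeII_orth_sum M S H B i l : typeII_orth M S H -> (i < B)%N -> (l <= i)%N ->
  \sum_(k < B) S i k * M k l = if i == l then H i else 0.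
Proof.
case=> [[_ S0] orth] lt_iB le_li; rewrite -(orth i l le_li); symmetry.
rewrite (big_ord_widen B (fun k => S i k * M k l) lt_iB) big_mkcond /=.
by apply: eq_bigr => k _; case: ltnP => // lt_ik; rewrite S0 ?mul0r.
Qed.

Definition row_connected (P Q : nat -> nat -> K) (y : nat -> K) : Prop :=
  forall m j, P m.+2 j = Q m.+2 j + (P m.+2 m.+1 - Q m.+2 m.+1) * Q m.+1 j + y m * Q m j.

Lemma typeII_orth_connected M M' S S' H H' (e : nat -> K) :
  typeII_orth M S H -> typeII_orth M' S' H' -> (forall p, tau M' p != 0) ->
  (forall k j, M' k j = M k j + e j * M k j.+2) ->
  row_connected S S' (fun m => e m * (H m.+2 / H' m)).
Proof.
move=> orth orth' tau' M'E m j; apply/subr0_eq.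
set x := S m.+2 m.+1 - S' m.+2 m.+1; set y := e m * _.
pose D k := S m.+2 k - (S' m.+2 k + x * S' m.+1 k + y * S' m k).
suff D0 k : D k = 0 by exact: D0 j.
have [[S1 S0] _] := orth; have [[S1' S0'] _] := orth'.
have D_gt k' : (m < k')%N -> D k' = 0.
  move=> lt_mk; rewrite /D (S0' m k' lt_mk) mulr0 addr0.
  have [->|ne1] := eqVneq k' m.+1; first by rewrite S1' mulr1 /x; ring.
  have lt_m1k : (m.+1 < k')%N by lia.
  rewrite (S0' m.+1 k' lt_m1k) mulr0 addr0.
  have [->|ne2] := eqVneq k' m.+2; first by rewrite S1 S1' subrr.
  by rewrite S0 ?S0' ?subrr //; lia.
have [/D_gt //|le_km] := ltnP m k.
apply: (tau_row_eq0 (tau' m.+1)) le_km => l lt_lm.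
rewrite (big_ord_widen m.+3 (fun k => D k * M' k l) (leqW (leqnSn m.+1))) big_mkcond.
rewrite (eq_bigr (fun k : 'I_m.+3 => D k * M' k l)) => [|k' _]; last first.
  by case: ltnP => // /D_gt ->; rewrite mul0r.
have S_M' : \sum_(k < m.+3) S m.+2 k * M' k l = e l * (if m == l then H m.+2 else 0).
  under eq_bigr do rewrite M'E mulrDr mulrCA.
  rewrite big_split /= -mulr_sumr !(typeII_orth_sum orth) ?eqSS; try lia.
  by rewrite (gtn_eqF (leqW lt_lm)) add0r.
under eq_bigr do rewrite /D mulrBl !mulrDl -!mulrA.
rewrite sumrB !big_split /= -!mulr_sumr S_M' !(typeII_orth_sum orth'); try lia.
rewrite (gtn_eqF (leqW lt_lm)) (gtn_eqF lt_lm); case: eqP => [<-|_]; last by ring.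
by rewrite mulVf ?mulr1; [ring | exact: (typeII_orth_H_neq0 orth')].
Qed.

End TypeIIOrthogonality.

Lemma eq_of_sub_eq (K : zmodType) (a b c d : K) : a = b -> c - d = a - b -> c = d.
Proof. by move=> -> cd; apply/subr0_eq; rewrite cd subrr. Qed.

Section ConnectionSquare.
Variable K : numFieldType.
Implicit Types (P A R : nat -> nat -> K).

(* The entries (P R^-1)_{m+2,m} and (P R^-1)_{m+3,m}; they do not depend on
   the intermediate array of a two-step connection from P to R. *)
Definition conn_coef2 P R m :=
  P m.+2 m - R m.+2 m - (P m.+2 m.+1 - R m.+2 m.+1) * R m.+1 m.

Definition conn_coef3 P R m :=
  P m.+3 m - R m.+3 m - (P m.+3 m.+2 - R m.+3 m.+2) * R m.+2 m
  - conn_coef2 P R m.+1 * R m.+1 m.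

Lemma conn_coef2_comp P A R (y1 y2 : nat -> K) m :
  row_connected P A y1 -> row_connected A R y2 -> lower_unitri A -> lower_unitri R ->
  y1 m + (P m.+2 m.+1 - A m.+2 m.+1) * (A m.+1 m - R m.+1 m) + y2 m
  = conn_coef2 P R m.
Proof.
move=> PA AR [A1 _] [R1 _].
have PE := PA m m; have AE := AR m m; rewrite A1 in PE; rewrite R1 in AE.
by rewrite /conn_coef2 PE AE; ring.
Qed.

Lemma conn_coef3_comp P A R (y1 y2 : nat -> K) m :
  row_connected P A y1 -> row_connected A R y2 -> lower_unitri A -> lower_unitri R ->
  (P m.+3 m.+2 - A m.+3 m.+2) * y2 m + y1 m.+1 * (A m.+1 m - R m.+1 m)
  = conn_coef3 P R m.
Proof.
move=> PA AR LA LR; have C2 := conn_coef2_comp m.+1 PA AR LA LR.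
have PE := PA m.+1 m; have AE := AR m.+1 m; have AE' := AR m m.
have [R1 _] := LR; rewrite R1 in AE'.
by rewrite /conn_coef3 -C2 PE AE AE'; ring.
Qed.

Definition christoffel_connected (S S' : nat -> nat -> K) (H H' : nat -> K) (e0 e1 : K) :=
  row_connected S S' (fun m => (if odd m then e1 else e0) * (H m.+2 / H' m)).

Section Square.
Variables (SP SA SB SAB : nat -> nat -> K) (HP HA HB HAB : nat -> K) (a0 a1 b0 b1 : K).
Hypotheses (PA : christoffel_connected SP SA HP HA a0 a1)
  (A_AB : christoffel_connected SA SAB HA HAB b0 b1)
  (PB : christoffel_connected SP SB HP HB b0 b1)
  (B_AB : christoffel_connected SB SAB HB HAB a0 a1).
Hypotheses (LA : lower_unitri SA) (LB : lower_unitri SB) (LAB : lower_unitri SAB).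

Local Notation f X n := (X n.*2.+1 n.*2).
Local Notation g X n := (X n.*2.+2 n.*2.+1).
Local Notation u X n := (X n.*2).
Local Notation v X n := (X n.*2.+1).

Lemma christoffel_square n :
  [/\ g SP n * (f SA n - f SB n) + g SA n * (f SAB n - f SA n)
        + g SB n * (f SB n - f SAB n)
      = a0 * (u HB n.+1 / u HAB n - u HP n.+1 / u HA n)
        + b0 * (u HP n.+1 / u HB n - u HA n.+1 / u HAB n),
      f SP n.+1 * (g SA n - g SB n) + f SA n.+1 * (g SAB n - g SA n)
        + f SB n.+1 * (g SB n - g SAB n)
      = a1 * (v HB n.+1 / v HAB n - v HP n.+1 / v HA n)
        + b1 * (v HP n.+1 / v HB n - v HA n.+1 / v HAB n),
      a0 * (u HB n.+1 / u HAB n) * (f SB n.+1 - f SP n.+1)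
        + b0 * (u HA n.+1 / u HAB n) * (f SP n.+1 - f SA n.+1)
        + a1 * (v HP n.+1 / v HA n) * (f SA n - f SAB n)
        + b1 * (v HP n.+1 / v HB n) * (f SAB n - f SB n) = 0 &
      a0 * (u HP n.+2 / u HA n.+1) * (g SAB n - g SA n)
        + b0 * (u HP n.+2 / u HB n.+1) * (g SB n - g SAB n)
        + a1 * (v HB n.+1 / v HAB n) * (g SP n.+1 - g SB n.+1)
        + b1 * (v HA n.+1 / v HAB n) * (g SA n.+1 - g SP n.+1) = 0].
Proof.
have coef2 m := etrans (conn_coef2_comp m PA A_AB LA LAB)
                       (esym (conn_coef2_comp m PB B_AB LB LAB)).
have coef3 m := etrans (conn_coef3_comp m PA A_AB LA LAB)
                       (esym (conn_coef3_comp m PB B_AB LB LAB)).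
have := coef2 n.*2; have := coef2 n.*2.+1; have := coef3 n.*2; have := coef3 n.*2.+1.
rewrite /= !odd_double /= !doubleS => E4 E3 E2 E1.
split.
- by apply: (eq_of_sub_eq E1); ring.
- by apply: (eq_of_sub_eq E2); ring.
- by apply: (eq_of_sub_eq E3); ring.
- by apply: (eq_of_sub_eq (esym E4)); ring.
Qed.

End Square.
End ConnectionSquare.

Section ChristoffelWeights.
Variable K : numFieldType.

Lemma poch_shift (b : K) k : b * poch (b + 1) k = poch b k * (b + k%:R).
Proof.
have -> : b * poch (b + 1) k = poch b k.+1.
  rewrite /poch big_ord_recl /= addr0; congr (_ * _); apply: eq_bigr => i _.
  by rewrite /bump /= add1n -addn1 natrD; ring.
by rewrite /poch big_ord_recr.
Qed.

Lemma hweight_shift_up Mb (b : 'I_Mb -> K) r Nc (c : 'I_Nc -> K) eta k :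
  b r != 0 ->
  hweight (shift_up b r) c eta k = (1 + 1 / b r * k%:R) * hweight b c eta k.
Proof.
move=> br0; rewrite /hweight (bigD1 r) //= [in RHS](bigD1 r) //= /shift_up eqxx.
under eq_bigr => i ne_ir do rewrite (negbTE ne_ir).
have -> : poch (b r + 1) k = poch (b r) k * (b r + k%:R) / b r.
  by rewrite -poch_shift mulrC mulKf.
have -> : 1 + 1 / b r * k%:R = (b r + k%:R) / b r by field.
by ring.
Qed.

Lemma hweight_shift_down Mb (b : 'I_Mb -> K) Nc (c : 'I_Nc -> K) s eta k :
  c s - 1 != 0 -> (forall j, poch (c j) k != 0) ->
  poch (c s - 1) k != 0 ->
  hweight b (shift_down c s) eta k = (1 + 1 / (c s - 1) * k%:R) * hweight b c eta k.
Proof.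
move=> cs0 poch_c poch_cs; rewrite /hweight (bigD1 s) //= [in RHS](bigD1 s) //=.
have -> : \prod_(j < Nc | j != s) poch (shift_down c s j) k
         = \prod_(j < Nc | j != s) poch (c j) k.
  by apply: eq_bigr => j ne_js; rewrite /shift_down (negbTE ne_js).
rewrite /shift_down eqxx.
have prod0 : \prod_(j < Nc | j != s) poch (c j) k != 0 by apply/prodf_neq0.
have rel := poch_shift (c s - 1) k; rewrite subrK in rel.
have cs_k0 : c s - 1 + k%:R != 0.
  by apply: contraNneq (mulf_neq0 cs0 (poch_c s)) => csk; rewrite rel csk mulr0.
have -> : poch (c s - 1) k = (c s - 1) * poch (c s) k / (c s - 1 + k%:R).
  by rewrite rel mulfK.
by field; rewrite pnatr_eq0 -lt0n fact_gt0 prod0 poch_c cs0 cs_k0.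
Qed.

Lemma moment_christoffel (w w' : nat -> K) (e : K) :
  (forall k, w' k = (1 + e * k%:R) * w k) -> (forall p, cvgn (series (msummand w p))) ->
  forall p, moment w' p = moment w p + e * moment w p.+1.
Proof.
move=> w'E cvg_w p; rewrite /moment.
have -> : msummand w' p = msummand w p + e *: msummand w p.+1.
  apply: boolp.funext => k; rewrite !fctE /msummand w'E exprS -[e *: _]/(e * _).
  ring.
rewrite lim_seriesD //; last exact: is_cvg_seriesZ.
by rewrite lim_seriesZ.
Qed.

Lemma momMat_christoffel (w1 w2 w1' w2' : nat -> K) (e1 e2 : K) :
  (forall k, w1' k = (1 + e1 * k%:R) * w1 k) ->
  (forall k, w2' k = (1 + e2 * k%:R) * w2 k) ->
  (forall p, cvgn (series (msummand w1 p))) ->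
  (forall p, cvgn (series (msummand w2 p))) ->
  forall k j, momMat w1' w2' k j
              = momMat w1 w2 k j + (if odd j then e2 else e1) * momMat w1 w2 k j.+2.
Proof.
move=> w1E w2E cvg1 cvg2 k j; rewrite /momMat /= negbK addnS.
by case: (odd j); exact: moment_christoffel.
Qed.

Lemma GaussBorel_christoffel (w1 w2 w1' w2' : nat -> K) (e1 e2 : K) S H St S' H' St' :
  (forall p, cvgn (series (msummand w1 p))) ->
  (forall p, cvgn (series (msummand w2 p))) ->
  (forall p, tau (momMat w1' w2') p != 0) ->
  (forall k, w1' k = (1 + e1 * k%:R) * w1 k) ->
  (forall k, w2' k = (1 + e2 * k%:R) * w2 k) ->
  GaussBorel (momMat w1 w2) S H St -> GaussBorel (momMat w1' w2') S' H' St' ->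
  christoffel_connected S S' H H' e1 e2.
Proof.
move=> cvg1 cvg2 tau' w1E w2E GB GB'.
apply: (typeII_orth_connected (GaussBorel_typeII_orth GB) (GaussBorel_typeII_orth GB'));
  by [| exact: momMat_christoffel].
Qed.

End ChristoffelWeights.

Section ShiftedParameters.
Variables (K : numFieldType) (N M1 M2 : nat).
Variables (b1 : 'I_M1 -> K) (b2 : 'I_M2 -> K) (c : 'I_N -> K) (eta1 eta2 : K).
Variables (r : 'I_M1) (q : 'I_M2) (s : 'I_N).
Variables (S St : bool -> bool -> bool -> nat -> nat -> K).
Variable H : bool -> bool -> bool -> nat -> K.

Definition shifted_GaussBorel : Prop :=
  forall x y z : bool, ~~ [&& x, y & z] ->
     let B1 := if x then shift_up b1 r else b1 in
     let B2 := if y then shift_up b2 q else b2 in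
     let C := if z then shift_down c s else c in
     admissible B1 B2 C eta1 eta2 /\
     GaussBorel (momMat (hweight B1 C eta1) (hweight B2 C eta2))
                (S x y z) (H x y z) (St x y z).

Hypothesis data : shifted_GaussBorel.

Lemma shifted_lower_unitri x y z : ~~ [&& x, y & z] -> lower_unitri (S x y z).
Proof. by move=> /data [_ []]. Qed.

Lemma shifted_christoffel_hat : b1 r != 0 -> forall y z, ~~ (y && z) ->
  christoffel_connected (S false y z) (S true y z) (H false y z) (H true y z) (1 / b1 r) 0.
Proof.
move=> b1r y z yz.
have [[_ cvg1 cvg2 _] GB] := @data false y z isT.
have [[_ _ _ tau'] GB'] := @data true y z yz.
apply: (GaussBorel_christoffel cvg1 cvg2 tau' _ _ GB GB') => k.
  exact: hweight_shift_up.
by rewrite mul0r addr0 mul1r.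
Qed.

Lemma shifted_christoffel_check : b2 q != 0 -> forall x z, ~~ (x && z) ->
  christoffel_connected (S x false z) (S x true z) (H x false z) (H x true z) 0 (1 / b2 q).
Proof.
move=> b2q x z xz.
have := @data x false z; rewrite andbF => /(_ isT) [[_ cvg1 cvg2 _] GB].
have [[_ _ _ tau'] GB'] := @data x true z xz.
apply: (GaussBorel_christoffel cvg1 cvg2 tau' _ _ GB GB') => k.
  by rewrite mul0r addr0 mul1r.
exact: hweight_shift_up.
Qed.

Lemma shifted_christoffel_tilde : c s - 1 != 0 -> forall x y, ~~ (x && y) ->
  christoffel_connected (S x y false) (S x y true) (H x y false) (H x y true)
    (1 / (c s - 1)) (1 / (c s - 1)).
Proof.
move=> cs1 x y xy.
have := @data x y false; rewrite !andbF => /(_ isT) [[poch_c cvg1 cvg2 _] GB].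
have := @data x y true; rewrite andbT => /(_ xy) [[poch_c' _ _ tau'] GB'].
have poch_cs k : poch (c s - 1) k != 0 by have := poch_c' s k; rewrite /shift_down eqxx.
apply: (GaussBorel_christoffel cvg1 cvg2 tau' _ _ GB GB') => k;
  exact: hweight_shift_down.
Qed.

End ShiftedParameters.

(* The flags (x, y, z) stand for (hat, check, tilde); the bar shift is n -> n + 1. *)
Theorem mainTheorem2 (K : numFieldType) (N M1 M2 : nat)
  (b1 : 'I_M1 -> K) (b2 : 'I_M2 -> K) (c : 'I_N -> K) (eta1 eta2 : K)
  (r : 'I_M1) (q : 'I_M2) (s : 'I_N)
  (S St : bool -> bool -> bool -> nat -> nat -> K)
  (H : bool -> bool -> bool -> nat -> K) :
  (forall x y z : bool, ~~ [&& x, y & z] ->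
     let B1 := if x then shift_up b1 r else b1 in
     let B2 := if y then shift_up b2 q else b2 in
     let C := if z then shift_down c s else c in
     admissible B1 B2 C eta1 eta2 /\
     GaussBorel (momMat (hweight B1 C eta1) (hweight B2 C eta2))
                (S x y z) (H x y z) (St x y z)) ->
  b1 r != 0 -> b2 q != 0 -> c s - 1 != 0 ->
  let dh := b1 r in let dc := b2 q in let dt := c s - 1 in
  let u x y z n := H x y z (2 * n)%N in
  let v x y z n := H x y z (2 * n + 1)%N in
  let f x y z n := S x y z (2 * n + 1)%N (2 * n)%N in
  let g x y z n := S x y z (2 * n + 2)%N (2 * n + 1)%N in
  let o := false in let i := true in
  forall n : nat,
  (* (1) hat, tilde, bar *)
  [/\ g o o o n * (f o o i n - f i o o n) + g o o i n * (f i o i n - f o o i n)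
        + g i o o n * (f i o o n - f i o i n)
      = 1 / dt * (u i o o n.+1 / u i o i n - u o o o n.+1 / u o o i n)
        + 1 / dh * (u o o o n.+1 / u i o o n - u o o i n.+1 / u i o i n),
      f o o o n.+1 * (g i o o n - g o o i n) + f o o i n.+1 * (g o o i n - g i o i n)
        + f i o o n.+1 * (g i o i n - g i o o n)
      = 1 / dt * (v o o o n.+1 / v o o i n - v i o o n.+1 / v i o i n),
      1 / dt * (u i o o n.+1 / u i o i n) * (f i o o n.+1 - f o o o n.+1)
        + 1 / dh * (u o o i n.+1 / u i o i n) * (f o o o n.+1 - f o o i n.+1)
        + 1 / dt * (v o o o n.+1 / v o o i n) * (f o o i n - f i o i n) = 0 &
      1 / dh * (u o o o n.+2 / u i o o n.+1) * (g i o o n - g i o i n)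
        + 1 / dt * (u o o o n.+2 / u o o i n.+1) * (g i o i n - g o o i n)
        + 1 / dt * (v i o o n.+1 / v i o i n) * (g o o o n.+1 - g i o o n.+1) = 0]
  /\
  (* (2) check, tilde, bar *)
  [/\ g o o o n * (f o o i n - f o i o n) + g o o i n * (f o i i n - f o o i n)
        + g o i o n * (f o i o n - f o i i n)
      = 1 / dt * (u o i o n.+1 / u o i i n - u o o o n.+1 / u o o i n),
      f o o o n.+1 * (g o o i n - g o i o n) + f o o i n.+1 * (g o i i n - g o o i n)
        + f o i o n.+1 * (g o i o n - g o i i n)
      = 1 / dt * (v o i o n.+1 / v o i i n - v o o o n.+1 / v o o i n)
        + 1 / dc * (v o o o n.+1 / v o i o n - v o o i n.+1 / v o i i n),
      1 / dt * (u o i o n.+1 / u o i i n) * (f o o o n.+1 - f o i o n.+1)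
        + 1 / dc * (v o o o n.+1 / v o i o n) * (f o i o n - f o i i n)
        + 1 / dt * (v o o o n.+1 / v o o i n) * (f o i i n - f o o i n) = 0 &
      1 / dt * (u o o o n.+2 / u o o i n.+1) * (g o o i n - g o i i n)
        + 1 / dc * (v o o i n.+1 / v o i i n) * (g o o o n.+1 - g o o i n.+1)
        + 1 / dt * (v o i o n.+1 / v o i i n) * (g o i o n.+1 - g o o o n.+1) = 0]
  /\
  (* (3) hat, check, bar *)
  [/\ 1 / dh * (u o i o n.+1 / u i i o n) * (f o o o n.+1 - f o i o n.+1)
        + 1 / dc * (v o o o n.+1 / v o i o n) * (f o i o n - f i i o n) = 0,
      1 / dh * (u o o o n.+2 / u i o o n.+1) * (g i i o n - g i o o n)
        + 1 / dc * (v i o o n.+1 / v i i o n) * (g i o o n.+1 - g o o o n.+1) = 0,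
      g o o o n * (f o i o n - f i o o n) + g o i o n * (f i i o n - f o i o n)
        + g i o o n * (f i o o n - f i i o n)
      = 1 / dh * (u o o o n.+1 / u i o o n - u o i o n.+1 / u i i o n) &
      f o o o n.+1 * (g o i o n - g i o o n) + f o i o n.+1 * (g i i o n - g o i o n)
        + f i o o n.+1 * (g i o o n - g i i o n)
      = 1 / dc * (v i o o n.+1 / v i i o n - v o o o n.+1 / v o i o n)].
Proof.
move=> hyp hb1 hb2 hc dh dc dt u v f g o i n.
have data : shifted_GaussBorel b1 b2 c eta1 eta2 r q s S St H := hyp.
have L := shifted_lower_unitri data.
have hat := shifted_christoffel_hat data hb1.
have check := shifted_christoffel_check data hb2.
have tilde := shifted_christoffel_tilde data hc.
have [A1 A2 A3 A4] := christoffel_square (tilde o o isT) (hat o i isT) (hat o o isT)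
  (tilde i o isT) (L o o i isT) (L i o o isT) (L i o i isT) n.
have [B1 B2 B3 B4] := christoffel_square (tilde o o isT) (check o i isT) (check o o isT)
  (tilde o i isT) (L o o i isT) (L o i o isT) (L o i i isT) n.
(* System (3) lists the identities of its square in the order 3, 4, 1, 2. *)
have [C3 C4 C1 C2] := christoffel_square (check o o isT) (hat i o isT) (hat o o isT)
  (check i o isT) (L o i o isT) (L i o o isT) (L i i o isT) n.
rewrite /u /v /f /g /o /i /dh /dc /dt !mul2n !addn1 !addn2.
split; [|split]; split.
- by apply: (eq_of_sub_eq A1); ring.
- by apply: (eq_of_sub_eq (esym A2)); ring.
- by apply: (eq_of_sub_eq A3); ring.
- by apply: (eq_of_sub_eq A4); ring.
- by apply: (eq_of_sub_eq B1); ring.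
- by apply: (eq_of_sub_eq B2); ring.
- by apply: (eq_of_sub_eq (esym B3)); ring.
- by apply: (eq_of_sub_eq (esym B4)); ring.
- by apply: (eq_of_sub_eq C1); ring.
- by apply: (eq_of_sub_eq (esym C2)); ring.
- by apply: (eq_of_sub_eq C3); ring.
- by apply: (eq_of_sub_eq C4); ring.
Qed.
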